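(* Let $(\omega,c)\in\mathbb{R}^2$ satisfy: $\omega>c^2/4$, or $\omega=c^2/4$ and $c>0$. Then, as $\eta_3\to\alpha_1$ with $\eta_3\in(\alpha_0,\alpha_1)$, $$k\to\begin{cases}1&\text{if }\omega>c^2/4,\\ \frac1{\sqrt2}&\text{if }\omega=c^2/4\text{ and }c>0,\end{cases}\qquad \beta^2\to\begin{cases}\dfrac{2\sqrt\omega+c}{2\sqrt\omega-c}&\text{if }\omega>c^2/4,\\ \infty&\text{if }\omega=c^2/4\text{ and }c>0.\end{cases}$$
   Context: $\alpha_0=\tfrac13(4c+\sqrt{48\omega+4c^2})$, $\alpha_1=4\sqrt\omega+2c$, $A(x)=-3x^2+8cx+64\omega$. For $\eta_3\in(\alpha_0,\alpha_1)$: $\eta_1=\frac{-\eta_3+4c-\sqrt{A(\eta_3)}}{2}<0$, $\eta_2=\frac{-\eta_3+4c+\sqrt{A(\eta_3)}}{2}\in(0,\eta_3)$, $k\in(0,1)$ with $k^2=\frac{-\eta_1(\eta_3-\eta_2)}{\eta_3(\eta_2-\eta_1)}$, and $\beta^2=-\eta_3k^2/\eta_1$. *)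

From HB Require Import structures.
From mathcomp Require Import all_boot all_order all_algebra.
From mathcomp Require Import all_classical all_reals all_analysis.
Set Implicit Arguments. Unset Strict Implicit. Unset Printing Implicit Defensive.
Import Order.TTheory GRing.Theory Num.Theory.
Import numFieldNormedType.Exports.
Local Open Scope ring_scope.
Local Open Scope classical_set_scope.

Section Defs.
Variable R : realType.
Implicit Types (w c x : R).

Definition alpha0 w c : R := (4 * c + Num.sqrt (48 * w + 4 * c ^+ 2)) / 3.
Definition alpha1 w c : R := 4 * Num.sqrt w + 2 * c.
Definition Apoly w c x : R := - 3 * x ^+ 2 + 8 * c * x + 64 * w.
Definition eta1 w c x : R := (- x + 4 * c - Num.sqrt (Apoly w c x)) / 2.
Definition eta2 w c x : R := (- x + 4 * c + Num.sqrt (Apoly w c x)) / 2.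
(* k^2 as a function of eta3 = x *)
Definition ksq w c x : R :=
  (- eta1 w c x * (x - eta2 w c x)) / (x * (eta2 w c x - eta1 w c x)).
Definition kmod w c x : R := Num.sqrt (ksq w c x).
Definition betasq w c x : R := - x * ksq w c x / eta1 w c x.
Definition eta3_dom w c : set R := [set x | alpha0 w c < x < alpha1 w c].
End Defs.

From HB Require Import structures.
From mathcomp Require Import all_boot all_order all_algebra.
From mathcomp Require Import all_classical all_reals all_analysis.
From mathcomp Require Import ring lra.
Set Implicit Arguments. Unset Strict Implicit. Unset Printing Implicit Defensive.
Import Order.TTheory GRing.Theory Num.Theory.
Import numFieldNormedType.Exports.
Local Open Scope ring_scope.
Local Open Scope classical_set_scope.

(* With D := sqrt (Apoly w c eta3) = eta2 - eta1 one has
   k^2 = -eta1 (eta3 - eta2) / (eta3 D) and beta^2 = eta3 k^2 / (-eta1).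
   When w >= c^2/4, at eta3 = alpha1 the root eta2 vanishes and
   -eta1 = D = 2 (2 sqrt w - c).  If w > c^2/4 this is positive, everything is
   continuous at alpha1, and the limits are the values there.  If w = c^2/4
   then alpha1 = 4c, Apoly = (3 eta3 + 4c)(4c - eta3), and on (8c/3, 4c)
   k^2 = (1 - 3 sqrt (4c - eta3) / sqrt (3 eta3 + 4c)) / 2 -> 1/2, while
   eta1 -> 0 from below, so beta^2 -> +oo. *)

Lemma cvgy_div_cvg0 {R : realFieldType} {T} {F : set_system T} {FF : Filter F}
    (f g : T -> R) (l : R) :
  0 < l -> f @ F --> l -> (\forall x \near F, 0 < g x) -> g @ F --> 0 ->
  f x / g x @[x --> F] --> +oo.
Proof.
move=> l_gt0 fl g_gt0 g0; apply/cvgryPge => A.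
have /cvgryPge ginv : (g x)^-1 @[x --> F] --> +oo by exact/cvgrVy.
near=> x.
have lf : l / 2 <= f x by apply/ltW; near: x; apply: (cvgr_gt _ fl); lra.
have Ag : 2 * `|A| / l <= (g x)^-1 by near: x; exact: ginv.
apply: le_trans (ler_norm A) _.
have -> : `|A| = l / 2 * (2 * `|A| / l) by field; rewrite gt_eqF.
by apply: ler_pM => //; rewrite ?divr_ge0 ?mulr_ge0 //; lra.
Unshelve. all: by end_near. Qed.

Section Roots.
Variables (R : realType) (w c : R).
Local Notation D x := (Num.sqrt (Apoly w c x)).

Lemma eta2_sub_eta1 x : eta2 w c x - eta1 w c x = D x.
Proof. by rewrite /eta1 /eta2; field. Qed.

Lemma ksqE x : ksq w c x = - eta1 w c x * (x - eta2 w c x) / (x * D x).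
Proof. by rewrite /ksq eta2_sub_eta1. Qed.

Lemma betasqE x : betasq w c x = x * ksq w c x / - eta1 w c x.
Proof. by rewrite /betasq invrN mulrN !mulNr. Qed.

Lemma continuous_Apoly : continuous (Apoly w c).
Proof.
have -> : Apoly w c = horner (- 3 *: 'X^2 + (8 * c) *: 'X + (64 * w)%:P).
  by apply/funext => x; rewrite /Apoly !hornerE.
exact: continuous_horner.
Qed.

Lemma continuous_sqrt_Apoly : continuous (fun x => D x).
Proof.
by move=> x; apply: continuous_comp; [exact: continuous_Apoly|exact: sqrt_continuous].
Qed.

Lemma continuous_eta1 : continuous (eta1 w c).
Proof.
move=> x; apply: cvgM; last exact: cvg_cst.
apply: cvgB; last exact: continuous_sqrt_Apoly.
by apply: cvgD; [apply: cvgN; exact: cvg_id|exact: cvg_cst].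
Qed.

Lemma continuous_eta2 : continuous (eta2 w c).
Proof.
move=> x; apply: cvgM; last exact: cvg_cst.
apply: cvgD; last exact: continuous_sqrt_Apoly.
by apply: cvgD; [apply: cvgN; exact: cvg_id|exact: cvg_cst].
Qed.

Lemma cvg_ksq a : a * D a != 0 -> ksq w c x @[x --> a] --> ksq w c a.
Proof.
move=> aD0; rewrite (funext ksqE); apply: cvgM.
  apply: cvgM; first by apply: cvgN; exact: continuous_eta1.
  by apply: cvgB; [exact: cvg_id|exact: continuous_eta2].
by apply: cvgV => //; apply: cvgM; [exact: cvg_id|exact: continuous_sqrt_Apoly].
Qed.

Lemma cvg_kmod {F : set_system R} {FF : Filter F} (l : R) :
  ksq w c x @[x --> F] --> l -> kmod w c x @[x --> F] --> Num.sqrt l.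
Proof. by move=> kl; apply: continuous_cvg => //; exact: sqrt_continuous. Qed.

Section Alpha1.
(* [lra] does not look at section hypotheses: they are moved to the goal first. *)
Hypothesis w_ge : c ^+ 2 / 4 <= w.
Local Notation s := (Num.sqrt w).

Lemma sqr_sqrt_w : s ^+ 2 = w.
Proof. by apply: sqr_sqrtr; move: w_ge; have := sqr_ge0 c; lra. Qed.

Lemma c_le_2sqrt_w : c <= 2 * s.
Proof.
apply: le_trans (ler_norm c) _.
rewrite -ler_sqr ?nnegrE ?mulr_ge0 ?sqrtr_ge0 //.
by rewrite real_normK ?num_real // exprMn sqr_sqrt_w; move: w_ge; lra.
Qed.

Lemma sqrt_Apoly_alpha1 : D (alpha1 w c) = 2 * (2 * s - c).
Proof.
have -> : Apoly w c (alpha1 w c) = (2 * (2 * s - c)) ^+ 2.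
  by rewrite /Apoly /alpha1 -[X in 64 * X]sqr_sqrt_w; ring.
by rewrite sqrtr_sqr ger0_norm //; have := c_le_2sqrt_w; lra.
Qed.

Lemma eta2_alpha1 : eta2 w c (alpha1 w c) = 0.
Proof. by rewrite /eta2 sqrt_Apoly_alpha1 /alpha1; field. Qed.

Lemma eta1_alpha1 : eta1 w c (alpha1 w c) = - D (alpha1 w c).
Proof. by rewrite -eta2_sub_eta1 eta2_alpha1 sub0r opprK. Qed.

End Alpha1.

Section AboveCritical.
Hypothesis w_gt : c ^+ 2 / 4 < w.
Let w_ge : c ^+ 2 / 4 <= w := ltW w_gt.
Local Notation s := (Num.sqrt w).

Lemma alpha1_sqrt_Apoly_gt0 : 0 < alpha1 w c /\ 0 < D (alpha1 w c).
Proof.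
have : c ^+ 2 < (2 * s) ^+ 2 by rewrite exprMn sqr_sqrt_w //; move: w_gt; lra.
rewrite -real_normK ?num_real // ltr_sqr ?nnegrE ?mulr_ge0 ?sqrtr_ge0 // ltr_norml.
by rewrite sqrt_Apoly_alpha1 // /alpha1; lra.
Qed.

Lemma cvg_ksq_alpha1 : ksq w c x @[x --> alpha1 w c] --> (1 : R).
Proof.
have [a_gt0 Da_gt0] := alpha1_sqrt_Apoly_gt0.
have -> : (1 : R) = ksq w c (alpha1 w c).
  rewrite ksqE eta1_alpha1 // eta2_alpha1 // subr0 opprK; field.
  by rewrite !gt_eqF.
by apply: cvg_ksq; rewrite mulf_neq0 ?gt_eqF.
Qed.

Lemma cvg_betasq_alpha1 :
  betasq w c x @[x --> alpha1 w c] --> (2 * s + c) / (2 * s - c).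
Proof.
have [a_gt0 Da_gt0] := alpha1_sqrt_Apoly_gt0.
rewrite (funext betasqE).
have -> : (2 * s + c) / (2 * s - c) = alpha1 w c * 1 / - eta1 w c (alpha1 w c).
  move: Da_gt0; rewrite eta1_alpha1 // opprK sqrt_Apoly_alpha1 // /alpha1 => Da_gt0.
  by field; rewrite gt_eqF //; lra.
apply: cvgM; first by apply: cvgM; [exact: cvg_id|exact: cvg_ksq_alpha1].
apply: cvgV; first by rewrite eta1_alpha1 // opprK gt_eqF.
by apply: cvgN; exact: continuous_eta1.
Qed.

End AboveCritical.

End Roots.

Section Critical.
Variables (R : realType) (c : R).
Hypothesis c_gt0 : 0 < c.
Local Notation w := (c ^+ 2 / 4).
Local Notation D x := (Num.sqrt (Apoly w c x)).
Local Notation F := (within (eta3_dom w c) (nbhs (alpha1 w c))).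

Lemma sqrt_critical : Num.sqrt w = c / 2.
Proof.
have -> : w = (c / 2) ^+ 2 by field.
by rewrite sqrtr_sqr ger0_norm //; move: c_gt0; lra.
Qed.

Lemma alpha1_critical : alpha1 w c = 4 * c.
Proof. by rewrite /alpha1 sqrt_critical; field. Qed.

Lemma near_critical : \forall x \near F, 0 < x < 4 * c.
Proof.
apply: filterS (near_withinT _ _) => x /andP[alpha0_lt].
rewrite alpha1_critical => -> /[!andbT].
apply: le_lt_trans alpha0_lt; rewrite /alpha0 divr_ge0 // addr_ge0 ?sqrtr_ge0 //.
by move: c_gt0; lra.
Qed.

Lemma sqrt_Apoly_critical x : 0 < x < 4 * c ->
  D x = Num.sqrt (3 * x + 4 * c) * Num.sqrt (4 * c - x).
Proof.
move=> /andP[x_gt0 _]; rewrite -sqrtrM; last by move: c_gt0; lra.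
by congr Num.sqrt; rewrite /Apoly; field.
Qed.

Lemma sqrt_factors_critical x : 0 < x < 4 * c ->
  0 < Num.sqrt (4 * c - x) < Num.sqrt (3 * x + 4 * c).
Proof.
move=> /andP[x_gt0 x_lt]; rewrite sqrtr_gt0 ltr_sqrt; move: c_gt0; lra.
Qed.

Lemma ksq_critical x : 0 < x < 4 * c ->
  ksq w c x = (1 - 3 * (Num.sqrt (4 * c - x) / Num.sqrt (3 * x + 4 * c))) / 2.
Proof.
move=> x_in; have /andP[x_gt0 x_lt] := x_in.
rewrite ksqE /eta1 /eta2 sqrt_Apoly_critical //.
have r2 : Num.sqrt (4 * c - x) ^+ 2 = 4 * c - x by rewrite sqr_sqrtr //; lra.
have q2 : Num.sqrt (3 * x + 4 * c) ^+ 2 = 3 * x + 4 * c.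
  by rewrite sqr_sqrtr //; move: c_gt0; lra.
move: (sqrt_factors_critical x_in) r2 q2.
move: (Num.sqrt (4 * c - x)) (Num.sqrt (3 * x + 4 * c)) => r q /andP[r_gt0 r_lt_q] r2 q2.
have -> : - x + 4 * c = r ^+ 2 by rewrite r2; ring.
have -> : x = (q ^+ 2 - r ^+ 2) / 4 by rewrite r2 q2; field.
by field; rewrite !gt_eqF //; lra.
Qed.

Lemma eta1_critical_lt0 x : 0 < x < 4 * c -> eta1 w c x < 0.
Proof.
move=> x_in; have /andP[x_gt0 x_lt] := x_in.
rewrite /eta1 sqrt_Apoly_critical //.
have r2 : Num.sqrt (4 * c - x) ^+ 2 = 4 * c - x by rewrite sqr_sqrtr //; lra.
have /andP[r_gt0 r_lt_q] := sqrt_factors_critical x_in.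
by move: r2 r_gt0 r_lt_q; nra.
Qed.

Lemma cvg_ksq_critical : ksq w c x @[x --> F] --> (1 / 2 : R).
Proof.
pose t x := Num.sqrt (4 * c - x) / Num.sqrt (3 * x + 4 * c).
apply: cvg_trans (near_eq_cvg (f := fun x => (1 - 3 * t x) / 2) _) _.
  by apply: filterS near_critical => x /ksq_critical.
rewrite alpha1_critical; apply: cvg_within_filter.
have r0 : Num.sqrt (4 * c - x) @[x --> 4 * c] --> 0.
  rewrite -sqrtr0 -(subrr (4 * c)); apply: continuous_cvg; first exact: sqrt_continuous.
  by apply: cvgB; [exact: cvg_cst|exact: cvg_id].
have q_lim : Num.sqrt (3 * x + 4 * c) @[x --> 4 * c] --> Num.sqrt (16 * c).
  have -> : 16 * c = 3 * (4 * c) + 4 * c by ring.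
  apply: continuous_cvg; first exact: sqrt_continuous.
  by apply: cvgD; [apply: cvgM; [exact: cvg_cst|exact: cvg_id]|exact: cvg_cst].
have q_neq0 : Num.sqrt (16 * c) != 0 by rewrite gt_eqF // sqrtr_gt0; move: c_gt0; lra.
have t0 : t x @[x --> 4 * c] --> 0.
  by rewrite -(mul0r (Num.sqrt (16 * c))^-1); exact: cvgM r0 (cvgV q_neq0 q_lim).
have -> : (1 / 2 : R) = (1 - 3 * 0) / 2 by rewrite mulr0 subr0.
apply: cvgM; last exact: cvg_cst.
by apply: cvgB; [exact: cvg_cst|apply: cvgM; [exact: cvg_cst|exact: t0]].
Qed.

Lemma cvg_betasq_critical : betasq w c x @[x --> F] --> +oo.
Proof.
rewrite (funext (@betasqE _ w c)); apply: (cvgy_div_cvg0 (l := 2 * c)).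
- by move: c_gt0; lra.
- have -> : 2 * c = alpha1 w c * (1 / 2) by rewrite alpha1_critical; field.
  by apply: cvgM; [exact: cvg_within_filter cvg_id|exact: cvg_ksq_critical].
- by apply: filterS near_critical => x /eta1_critical_lt0; rewrite oppr_gt0.
- have -> : 0 = - eta1 w c (alpha1 w c).
    by rewrite eta1_alpha1 ?lexx // opprK sqrt_Apoly_alpha1 ?lexx // sqrt_critical; field.
  by apply: cvg_within_filter; apply: cvgN; exact: continuous_eta1.
Qed.

End Critical.

Theorem lemma3p6 (R : realType) (w c : R) :
  (c ^+ 2 / 4 < w \/ (w = c ^+ 2 / 4 /\ 0 < c)) ->
  (c ^+ 2 / 4 < w ->
     kmod w c x @[x --> within (eta3_dom w c) (nbhs (alpha1 w c))] --> (1 : R) /\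
     betasq w c x @[x --> within (eta3_dom w c) (nbhs (alpha1 w c))] -->
       ((2 * Num.sqrt w + c) / (2 * Num.sqrt w - c) : R)) /\
  (w = c ^+ 2 / 4 -> 0 < c ->
     kmod w c x @[x --> within (eta3_dom w c) (nbhs (alpha1 w c))] -->
       (1 / Num.sqrt 2 : R) /\
     betasq w c x @[x --> within (eta3_dom w c) (nbhs (alpha1 w c))] --> +oo).
Proof.
(* Each conclusion carries its own case hypothesis. *)
move=> _; split=> [w_gt | -> c_gt0]; split.
- rewrite -sqrtr1; apply: cvg_kmod.
  exact: cvg_within_filter (cvg_ksq_alpha1 w_gt).
- exact: cvg_within_filter (cvg_betasq_alpha1 w_gt).
- have -> : 1 / Num.sqrt 2 = Num.sqrt (1 / 2) :> R by rewrite !div1r sqrtrV.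
  exact: cvg_kmod (cvg_ksq_critical c_gt0).
- exact: cvg_betasq_critical.
Qed.
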